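(* Under the hypotheses in the context (decomposition of $\mathcal X$ over $A$, $g\in\mathcal G_s$, integer $T>0$, and $\operatorname{argmin}_{u\in\mathcal U} J^*_{t+1}(Ax+Bu)\cap[\bigoplus_{i\in\mathcal I}\mathcal E_i]\neq\emptyset$ for all $x\in\mathcal X$, $t\in\{0,\dots,T-1\}$), for every $i\in\mathcal I$ the restriction of the optimal cost $J^*$ of $(A,B,g,T)$ to $\mathcal X_i$ equals the optimal cost $\bar J_i^*$ of the subproblem $(A,B|_{\mathcal E_i},g,T)$.
   Context: Let $\mathcal F$ be a field and $\mathcal X,\mathcal U$ finite-dimensional vector spaces over $\mathcal F$. Let $A:\mathcal X\to\mathcal X$ and $B:\mathcal U\to\mathcal X$ be linear maps with $B$ injective, and let $g:\mathcal X\to\mathbb R_{\ge0}$ satisfy $g(x)=0\iff x=0$. Standing assumption: all minima appearing below are attained. For the finite-horizon problem $(A,B,g,T)$ associated with $x_{t+1}=Ax_t+Bu_t$ (cost $\sum_{t=0}^Tg(x_t)$ minimized over $u_0,\dots,u_{T-1}\in\mathcal U$), the cost-to-go functions are $J^*_T=g$ and $J^*_t(x)=g(x)+\min_{u\in\mathcal U}J^*_{t+1}(Ax+Bu)$; the optimal cost is $J^*=J^*_0$. A decomposition of $\mathcal X$ over $A$ is a direct sum $\mathcal X=\mathcal X_1\oplus\cdots\oplus\mathcal X_r$ with $r>1$ and $A\mathcal X_i\subseteq\mathcal X_i$ for all $i\in\mathcal I=\{1,\dots,r\}$; $\rho_i:\mathcal X\to\mathcal X_i$ is the projection along the other summands.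 $\mathcal G_s$ is the set of $h:\mathcal X\to\mathbb R_{\ge0}$ with $h(x)=\sum_i h(\rho_i(x))$ for all $x$. $\mathcal E_i=\{u\in\mathcal U:Bu\in\mathcal X_i\}$. Subproblem $(A,B|_{\mathcal E_i},g,T)$: system $x_{i,t+1}=Ax_{i,t}+B\bar u_{i,t}$ with states in $\mathcal X_i$ and inputs in $\mathcal E_i$, cost $\sum_{t=0}^Tg(x_{i,t})$; its optimal cost is $\bar J_i^*$ (equivalently $\bar J^*_{i,0}$ where $\bar J^*_{i,T}=g|_{\mathcal X_i}$ and $\bar J^*_{i,t}(z)=g(z)+\min_{u\in\mathcal E_i}\bar J^*_{i,t+1}(Az+Bu)$). *)

From HB Require Import structures.
From mathcomp Require Import all_boot all_order all_algebra.
From Stdlib Require Import ClassicalEpsilon.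
Set Implicit Arguments. Unset Strict Implicit. Unset Printing Implicit Defensive.
Import Order.TTheory GRing.Theory Num.Theory.
Local Open Scope ring_scope.

Section Defs.
Variables (F : fieldType) (X U : vectType F) (R : realFieldType).

Definition is_argmin (S : U -> Prop) (f : U -> R) (u : U) : Prop :=
  S u /\ forall v, S v -> f u <= f v.

(* min_{u in S} f u  (the value is only meaningful when the minimum is attained;
   otherwise it is an arbitrary default 0) *)
Definition minval (S : U -> Prop) (f : U -> R) : R :=
  match excluded_middle_informative (exists u, is_argmin S f u) with
  | left H => f (proj1_sig (constructive_indefinite_description _ H))
  | right _ => 0
  end.

Fixpoint ctg (A : 'End(X)) (B : 'Hom(U, X)) (g : X -> R) (S : U -> Prop)
  (k : nat) (x : X) : R :=
  match k with
  | 0 => g x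
  | k'.+1 => g x + minval S (fun u => ctg A B g S k' (A x + B u))
  end.

Definition Jstar A B g (T t : nat) : X -> R := ctg A B g (fun _ => True) (T - t).

Definition Eset (B : 'Hom(U, X)) (Xi : {vspace X}) : U -> Prop :=
  fun u => B u \in Xi.

Definition Jbar A B g (Xi : {vspace X}) (T t : nat) : X -> R :=
  ctg A B g (Eset B Xi) (T - t).

Definition rho r (Xs : 'I_r -> {vspace X}) (i : 'I_r) : 'End(X) :=
  sumv_pi (\sum_(j < r) Xs j)%VS i.

Definition decomposition (A : 'End(X)) r (Xs : 'I_r -> {vspace X}) : Prop :=
  [/\ (1 < r)%N, directv (\sum_(j < r) Xs j)%VS,
      (\sum_(j < r) Xs j)%VS = fullv
    & forall i, (A @: Xs i <= Xs i)%VS].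

Definition in_Gs r (Xs : 'I_r -> {vspace X}) (g : X -> R) : Prop :=
  (forall x, 0 <= g x) /\ forall x, g x = \sum_(i < r) g (rho Xs i x).

Definition Esum (B : 'Hom(U, X)) r (Xs : 'I_r -> {vspace X}) : {vspace U} :=
  (\sum_(i < r) (B @^-1: Xs i))%VS.

End Defs.

From HB Require Import structures.
From mathcomp Require Import all_boot all_order all_algebra.
From Stdlib Require Import ClassicalEpsilon.
Import Order.TTheory GRing.Theory Num.Theory.
Local Open Scope ring_scope.

(** Because the summands X_i are A-invariant and g is additive over them, the
   one-step cost g x + J_{k}(A x + B u) splits into a sum of per-summand costs,
   each depending only on rho_i x and rho_i (B u). When some minimizer u lies in
   the direct sum of the E_i, the components of B u can be chosen independently,
   so the minimum of the sum is the sum of the per-summand minima over E_i. By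
   induction on the horizon, J^*_t = sum_i Jbar^*_{i,t} o rho_i; on X_i all
   other terms vanish, since each cost-to-go is nonnegative and zero at 0. *)

Section CostToGo.
Context {F : fieldType} {X U : vectType F} {R : realFieldType}.
Context {A : 'End(X)} {B : 'Hom(U, X)} {g : X -> R}.
Hypothesis g_ge0 : forall x, 0 <= g x.

Lemma minval_argmin {S : U -> Prop} {f : U -> R} {u : U} :
  is_argmin S f u -> minval S f = f u.
Proof.
move=> [Su fu_min]; rewrite /minval.
case: excluded_middle_informative => [H|[]]; last by exists u.
case: constructive_indefinite_description => c [Sc fc_min] /=.
by apply/le_anti; rewrite fc_min // fu_min.
Qed.

Lemma minval_ge0 (S : U -> Prop) (f : U -> R) :
  (forall u, 0 <= f u) -> 0 <= minval S f.
Proof. by move=> f_ge0; rewrite /minval; case: excluded_middle_informative. Qed.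

Lemma ctg_ge0 S k x : 0 <= ctg A B g S k x.
Proof.
elim: k x => [|k IH] x /=; first exact: g_ge0.
by rewrite addr_ge0 // minval_ge0.
Qed.

Lemma ctg0 S : g 0 = 0 -> S 0 -> forall k, ctg A B g S k 0 = 0.
Proof.
move=> g0 S0; elim=> [|k IH] //=.
rewrite g0 add0r (minval_argmin (u := 0)); first by rewrite !linear0 add0r IH.
by split=> // v _; rewrite !linear0 add0r IH ctg_ge0.
Qed.

End CostToGo.

Section DirectSum.
Context {F : fieldType} {X : vectType F} {r : nat} {Xs : 'I_r -> {vspace X}}.
Hypothesis Xs_direct : directv (\sum_(j < r) Xs j).
Hypothesis Xs_full : (\sum_(j < r) Xs j)%VS = fullv.

Lemma rho_mem j x : rho Xs j x \in Xs j.
Proof. exact: memv_sum_pi. Qed.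

Lemma sum_rho x : \sum_j rho Xs j x = x.
Proof. by rewrite sumv_pi_sum // Xs_full memvf. Qed.

Lemma rho_sum (ys : 'I_r -> X) k :
  (forall j, ys j \in Xs j) -> rho Xs k (\sum_j ys j) = ys k.
Proof.
move=> ys_mem; move/directv_sum_unique: Xs_direct => uniq_sum.
have := uniq_sum (fun j => rho Xs j (\sum_j ys j)) ys.
rewrite sum_rho eqxx => /(_ (fun j _ => rho_mem j _) (fun j _ => ys_mem j)).
by move=> /esym/forall_inP/(_ k isT)/eqP.
Qed.

Lemma rho_memE i y k : y \in Xs i -> rho Xs k y = if k == i then y else 0.
Proof.
move=> yi; have y_sum : y = \sum_j (if j == i then y else 0).
  by rewrite -big_mkcond big_pred1_eq.
by rewrite {1}y_sum rho_sum // => j; case: eqP => [->|_]; rewrite ?mem0v.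
Qed.

Lemma rho_invariant (A : 'End(X)) k x :
  (forall j, (A @: Xs j <= Xs j)%VS) -> rho Xs k (A x) = A (rho Xs k x).
Proof.
move=> A_inv; rewrite -{1}(sum_rho x) linear_sum rho_sum // => j.
exact/(subvP (A_inv j))/memv_img/rho_mem.
Qed.

Context {U : vectType F} {B : 'Hom(U, X)} {R : realFieldType}.

Lemma rho_B_sum (ws : 'I_r -> U) k :
  (forall j, Eset B (Xs j) (ws j)) -> rho Xs k (B (\sum_j ws j)) = B (ws k).
Proof. by move=> ws_mem; rewrite linear_sum rho_sum. Qed.

Lemma separable_argmin {h : 'I_r -> X -> R} {us : U} {v : 'I_r -> U} :
  is_argmin (fun _ => True) (fun u => \sum_j h j (rho Xs j (B u))) us ->
  us \in Esum B Xs ->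
  (forall j, is_argmin (Eset B (Xs j)) (fun w => h j (B w)) (v j)) ->
  \sum_j h j (rho Xs j (B us)) = \sum_j h j (B (v j)).
Proof.
move=> [_ us_min] us_mem v_min.
have v_mem j : Eset B (Xs j) (v j) by case: (v_min j).
apply/le_anti/andP; split.
  have := us_min (\sum_j v j) I.
  by under [X in _ <= X -> _]eq_bigr => j _ do rewrite rho_B_sum //.
case/memv_sumP: us_mem => ws ws_mem ->.
have ws_E j : Eset B (Xs j) (ws j).
  by have := ws_mem j isT; rewrite /Eset memv_preim.
apply: ler_sum => j _; rewrite rho_B_sum //.
by case: (v_min j) => _; apply.
Qed.

End DirectSum.

Section Decomposition.
Context {F : fieldType} {X U : vectType F} {R : realFieldType}.
Context {A : 'End(X)} {B : 'Hom(U, X)} {g : X -> R}.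
Context {r : nat} {Xs : 'I_r -> {vspace X}}.
Hypothesis Xs_direct : directv (\sum_(j < r) Xs j).
Hypothesis Xs_full : (\sum_(j < r) Xs j)%VS = fullv.
Hypothesis A_invariant : forall j, (A @: Xs j <= Xs j)%VS.
Hypothesis g_sum : forall x, g x = \sum_(j < r) g (rho Xs j x).

Local Notation J := (ctg A B g (fun _ => True)).
Local Notation Jbar j := (ctg A B g (Eset B (Xs j))).

Lemma ctg_sum_step k x :
  (forall y, J k y = \sum_j Jbar j k (rho Xs j y)) ->
  (exists2 us, is_argmin (fun _ => True) (fun u => J k (A x + B u)) us
             & us \in Esum B Xs) ->
  (forall j, exists v, is_argmin (Eset B (Xs j))
                         (fun v => Jbar j k (A (rho Xs j x) + B v)) v) ->
  J k.+1 x = \sum_j Jbar j k.+1 (rho Xs j x).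
Proof.
move=> J_sum [us [_ us_min] us_mem] /fin_all_exists[v v_min].
pose h j y := Jbar j k (A (rho Xs j x) + y).
have J_sep u : J k (A x + B u) = \sum_j h j (rho Xs j (B u)).
  rewrite J_sum; apply: eq_bigr => j _.
  by rewrite /h -(rho_invariant Xs_direct Xs_full _ _ _ A_invariant) -linearD.
have us_sep :
    is_argmin (fun _ => True) (fun u => \sum_j h j (rho Xs j (B u))) us.
  by split=> // w _; rewrite -!J_sep us_min.
rewrite /= (minval_argmin (u := us)) //.
under [RHS]eq_bigr => j _ do rewrite /= (minval_argmin (u := v j)) //.
rewrite big_split /= -g_sum J_sep.
by rewrite (separable_argmin Xs_direct Xs_full us_sep us_mem v_min).
Qed.

Lemma ctg_sum K :
  (forall k x, (k < K)%N ->
     exists2 us, is_argmin (fun _ => True) (fun u => J k (A x + B u)) us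
               & us \in Esum B Xs) ->
  (forall j k z, (k < K)%N -> z \in Xs j ->
     exists v, is_argmin (Eset B (Xs j)) (fun v => Jbar j k (A z + B v)) v) ->
  forall k, (k <= K)%N -> forall x, J k x = \sum_j Jbar j k (rho Xs j x).
Proof.
move=> J_argmin Jbar_argmin; elim=> [|k IH] kK x; first exact: g_sum.
apply: ctg_sum_step; first exact/IH/ltnW.
  exact: J_argmin.
by move=> j; apply/Jbar_argmin/rho_mem.
Qed.

End Decomposition.

Theorem corollary2 (F : fieldType) (X U : vectType F) (R : realFieldType)
  (A : 'End(X)) (B : 'Hom(U, X)) (g : X -> R) (r : nat)
  (Xs : 'I_r -> {vspace X}) (T : nat) :
  injective B ->
  (forall x, g x = 0 <-> x = 0) ->
  decomposition A Xs ->
  in_Gs Xs g ->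
  (0 < T)%N ->
  (forall (t : nat) (x : X), (t < T)%N ->
     exists u, is_argmin (fun _ => True) (fun u => Jstar A B g T t.+1 (A x + B u)) u) ->
  (forall (i : 'I_r) (t : nat) (z : X), (t < T)%N -> z \in Xs i ->
     exists u, is_argmin (Eset B (Xs i))
                 (fun u => Jbar A B g (Xs i) T t.+1 (A z + B u)) u) ->
  (forall (t : nat) (x : X), (t < T)%N ->
     exists u, is_argmin (fun _ => True) (fun u => Jstar A B g T t.+1 (A x + B u)) u
               /\ u \in Esum B Xs) ->
  forall (i : 'I_r) (z : X), z \in Xs i ->
    Jstar A B g T 0 z = Jbar A B g (Xs i) T 0 z.
Proof.
move=> _ g_eq0 [_ Xs_direct Xs_full A_inv] [g_ge0 g_sum] _ _ Jbar_argmin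
  J_argmin i z zi.
have g0 : g 0 = 0 by apply/g_eq0.
(* Steps remaining k correspond to time t = T - k.+1. *)
have time_of_steps k :
    (k < T)%N -> (T - k.+1 < T)%N /\ (T - (T - k.+1).+1 = k)%N.
  by move=> kT; rewrite ltn_subrL subnSK // subKn // (leq_trans _ kT).
rewrite /Jstar /Jbar !subn0 (ctg_sum Xs_direct Xs_full A_inv g_sum T) //.
- rewrite (bigD1 i) //= big1 ?addr0.
    by rewrite (rho_memE Xs_direct Xs_full _ _ _ zi) eqxx.
  move=> j ji; rewrite (rho_memE Xs_direct Xs_full _ _ _ zi) (negPf ji) ctg0 //.
  by rewrite /Eset linear0 mem0v.
- move=> k x /time_of_steps[tT tk].
  by have [u [u_min u_mem]] := J_argmin _ x tT; exists u; rewrite // -tk.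
- by move=> j k y /time_of_steps[tT tk] yj; rewrite -tk; apply: Jbar_argmin.
Qed.
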